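(* Let $G$ be a finite group, $p$ an odd prime, and $A=\langle a\rangle$ a cyclic subgroup of $G$ of order $p^n$. Let $\eta\in\mathrm{Aut}(G)$. The following are equivalent: (1) there is a relative gamma function $\gamma:A\to\mathrm{Aut}(G)$ with $\gamma(a)=\eta$; (2) $A$ is $\eta$-invariant and the order of $\eta$ divides $p^n$. When these hold, such a $\gamma$ is unique.
   Context: Maps act on the right, written exponentially. For $A\le G$, a function $\gamma:A\to\mathrm{Aut}(G)$ is a relative gamma function on $A$ if $\gamma(g^{\gamma(h)}h)=\gamma(g)\gamma(h)$ for all $g,h\in A$ and $a^{\gamma(b)}\in A$ for all $a,b\in A$. *)

From mathcomp Require Import all_boot all_fingroup.
Set Implicit Arguments. Unset Strict Implicit. Unset Printing Implicit Defensive.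
Local Open Scope group_scope.

(* Automorphisms of G are permutations of gT in [Aut G] (identity off G).
   Maps act on the right: x^{gamma h} is (gamma h) x, and MathComp's
   permutation product (s * t) x = t (s x) matches the right-action
   composition gamma(g) gamma(h). *)
Definition rel_gamma (gT : finGroupType) (G A : {set gT})
  (gamma : gT -> {perm gT}) : Prop :=
  [/\ {in A, forall x, gamma x \in Aut G},
      {in A &, forall g h, gamma (gamma h g * h) = gamma g * gamma h} &
      {in A &, forall x y, gamma y x \in A}].

From mathcomp Require Import all_boot all_fingroup all_solvable ring.
Set Implicit Arguments. Unset Strict Implicit. Unset Printing Implicit Defensive.

(* A relative gamma function with [gamma a = eta] is determined on the
   twisted powers [b_0 = 1], [b_(k+1) = eta(b_k) a] by [gamma b_k = eta ^+ k].
   Writing [eta a = a ^+ s], one has [b_k = a ^+ (1 + s + ... + s ^ k.-1)].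
   If [s = 1 (mod p)] and [p] is odd, this geometric sum has the same p-adic
   valuation as [k], so [k |-> b_k] is a bijection from Z/p^n onto <[a]>:
   this gives uniqueness, and existence exactly when [#[eta] %| p ^ n].
   If [s <> 1 (mod p)], some [c] in <[a]> satisfies [eta c * a = c], which
   forces [gamma a = 1]. *)

(* Horner form of [1 + s + ... + s ^ k.-1]. *)
Definition geom_sum (s k : nat) : nat := iter k (fun t => s * t + 1) 0.

Lemma geom_sumS s k : geom_sum s k.+1 = s * geom_sum s k + 1.
Proof. by []. Qed.

Lemma geom_sum_gt0 s k : 0 < k -> 0 < geom_sum s k.
Proof. by case: k => // k _; rewrite geom_sumS addn1. Qed.

Lemma geom_sumD s i j : geom_sum s (i + j) = s ^ j * geom_sum s i + geom_sum s j.
Proof.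
elim: j => [|j IH]; first by rewrite addn0 expn0 mul1n addn0.
by rewrite addnS !geom_sumS IH expnS; ring.
Qed.

Lemma geom_sumM s m j : geom_sum s (j * m) = geom_sum s m * geom_sum (s ^ m) j.
Proof.
elim: j => [|j IH]; first by rewrite mul0n muln0.
by rewrite mulSnr geom_sumD IH geom_sumS; ring.
Qed.

Lemma geom_sum_mod q s k : s = 1 %[mod q] -> geom_sum s k = k %[mod q].
Proof.
move=> s1; elim: k => [|k IH] //.
by rewrite geom_sumS -modnDml -modnMml s1 modnMml mul1n -/(geom_sum s k) IH modnDml addn1.
Qed.

Lemma expn_mod1 q s k : s = 1 %[mod q] -> s ^ k = 1 %[mod q].
Proof. by move=> s1; rewrite -modnXm s1 modnXm exp1n. Qed.

Lemma geom_sum_1add x j : exists f, geom_sum (1 + x) j = j + x * 'C(j, 2) + x ^ 2 * f.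
Proof.
elim: j => [|j [f IH]]; first by exists 0; rewrite bin0n !muln0.
by exists ('C(j, 2) + f + x * f); rewrite geom_sumS IH binS bin1; ring.
Qed.

Section Valuation.
Variable p : nat.
Hypotheses (p_pr : prime p) (p_odd : odd p).

Lemma logn_geom_sum_prime s : s = 1 %[mod p] -> logn p (geom_sum s p) = 1.
Proof.
move=> s1.
have p_gt1 := prime_gt1 p_pr.
have [w ->] : exists w, s = 1 + p * w.
  by exists (s %/ p); rewrite {1}(divn_eq s p) s1 modn_small // addnC mulnC.
have [c Cp2] : exists c, 'C(p, 2) = p * c.
  have p_gt2 : 2 < p by move: p_gt1 p_odd; case: (p) => [|[|[]]].
  by have /dvdnP [c ->] := prime_dvd_bin p_pr (p_gt2 : 0 < 2 < p); exists c; rewrite mulnC.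
have [f ->] := geom_sum_1add (p * w) p.
have -> : p + p * w * 'C(p, 2) + (p * w) ^ 2 * f = p * (1 + p * (w * c + w ^ 2 * f)).
  by rewrite Cp2; ring.
rewrite lognM ?(prime_gt0 p_pr) // logn_prime // eqxx logn_coprime //.
by rewrite prime_coprime // dvdn_addl ?dvdn_mulr // dvdn1 neq_ltn p_gt1 orbT.
Qed.

Lemma logn_geom_sum_pexp s k : s = 1 %[mod p] -> logn p (geom_sum s (p ^ k)) = k.
Proof.
move=> s1; elim: k => [|k IH]; first by rewrite expn0 geom_sumS muln0 logn1.
rewrite expnS geom_sumM lognM ?geom_sum_gt0 ?expn_gt0 ?(prime_gt0 p_pr) //.
by rewrite IH logn_geom_sum_prime ?expn_mod1 // addn1.
Qed.

Lemma logn_geom_sum s d : s = 1 %[mod p] -> logn p (geom_sum s d) = logn p d.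
Proof.
move=> s1; have [-> // | d_gt0] := posnP d.
have [m p'm d_eq] := pfactor_coprime p_pr d_gt0; set e := logn p d in d_eq *.
have m_gt0 : 0 < m by move: d_gt0; rewrite d_eq muln_gt0 => /andP[].
rewrite d_eq.
have p'g : coprime p (geom_sum (s ^ (p ^ e)) m).
  by rewrite -coprime_modr geom_sum_mod ?expn_mod1 // coprime_modr.
rewrite geom_sumM lognM ?geom_sum_gt0 ?expn_gt0 ?(prime_gt0 p_pr) //.
by rewrite logn_geom_sum_pexp // (logn_coprime p'g) addn0.
Qed.

Lemma dvdn_geom_sum s n d : s = 1 %[mod p] -> (p ^ n %| geom_sum s d) = (p ^ n %| d).
Proof.
move=> s1; have [-> // | d_gt0] := posnP d.
by rewrite !pfactor_dvdn ?geom_sum_gt0 ?logn_geom_sum.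
Qed.

Lemma eqn_geom_sum_mod s n i j :
  s = 1 %[mod p] -> (geom_sum s i == geom_sum s j %[mod p ^ n]) = (i == j %[mod p ^ n]).
Proof.
move=> s1; wlog le_ij : i j / i <= j.
  by move=> IH; case/orP: (leq_total i j) => /IH //; rewrite eq_sym [X in _ = X]eq_sym.
have p's : coprime (p ^ n) (s ^ i).
  by rewrite coprimeXl // coprimeXr // prime_coprime // /dvdn s1 modn_small ?prime_gt1.
rewrite -(subnK le_ij) geom_sumD eq_sym [X in _ = X]eq_sym.
by rewrite !eqn_mod_dvd ?leq_addl // !addnK Gauss_dvdr // dvdn_geom_sum.
Qed.

End Valuation.

Lemma fermat_little_pexp s p k : prime p -> s ^ (p ^ k) = s %[mod p].
Proof.
move=> p_pr; elim: k => [|k IH]; first by rewrite expn0 expn1.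
by rewrite expnSr expnM -modnXm IH modnXm fermat_little.
Qed.

Local Open Scope group_scope.

Lemma cycle_expS (gT : finGroupType) (a x : gT) : x \in <[a]> -> exists r, x = a ^+ r.+1.
Proof.
case/cycleP=> i ->; exists (i + #[a]).-1.
by rewrite prednK ?addn_gt0 ?order_gt0 ?orbT // expgD expg_order mulg1.
Qed.

Section AutExp.
Variables (gT : finGroupType) (G : {group gT}) (f : {perm gT}).
Hypothesis AutGf : f \in Aut G.

Lemma aut1 : f 1 = 1.
Proof. by rewrite -(autmE AutGf) morph1. Qed.

Lemma aut_mul : {in G &, {morph f : x y / x * y}}.
Proof. by move=> x y Gx Gy; rewrite -(autmE AutGf) morphM. Qed.

Lemma aut_expg i : {in G, {morph f : x / x ^+ i}}.
Proof. by move=> x Gx; rewrite -(autmE AutGf) morphX. Qed.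

Lemma aut_cycle_expg a s : a \in G -> f a = a ^+ s -> {in <[a]>, forall x, f x = x ^+ s}.
Proof.
by move=> Ga fa _ /cycleP [i ->]; rewrite aut_expg // fa -!expgM mulnC.
Qed.

End AutExp.

(* [twisted_pow eta a k] is the [k]-th power of [a] for the product
   [g o h = g^(gamma h) h] of a gamma function with [gamma a = eta]. *)
Definition twisted_pow (gT : finGroupType) (eta : {perm gT}) (a : gT) (k : nat) : gT :=
  iter k (fun x => eta x * a) 1.

Lemma twisted_powS (gT : finGroupType) (eta : {perm gT}) a k :
  twisted_pow eta a k.+1 = eta (twisted_pow eta a k) * a.
Proof. by []. Qed.

Section TwistedPow.
Variables (gT : finGroupType) (G : {group gT}) (eta : {perm gT}) (a : gT).
Hypotheses (AutGeta : eta \in Aut G) (Ga : a \in G).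

Lemma twisted_pow_in k : twisted_pow eta a k \in G.
Proof.
by elim: k => [|k IH]; rewrite ?group1 // twisted_powS groupM ?Aut_closed.
Qed.

Lemma twisted_powD i j :
  twisted_pow eta a (i + j) = (eta ^+ j) (twisted_pow eta a i) * twisted_pow eta a j.
Proof.
elim: j => [|j IH]; first by rewrite addn0 expg0 perm1 mulg1.
have AutGetaj : eta ^+ j \in Aut G by rewrite groupX.
rewrite addnS !twisted_powS IH (aut_mul AutGeta) ?Aut_closed ?twisted_pow_in //.
by rewrite expgSr permM mulgA.
Qed.

Lemma twisted_pow_geom s k : eta a = a ^+ s -> twisted_pow eta a k = a ^+ geom_sum s k.
Proof.
move=> etaa; elim: k => [|k IH] //.
rewrite twisted_powS IH (aut_cycle_expg AutGeta Ga etaa) ?mem_cycle //.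
by rewrite -expgM mulnC geom_sumS addn1 expgSr.
Qed.

End TwistedPow.

Section RelGamma.
Variables (gT : finGroupType) (G A : {group gT}) (gamma : gT -> {perm gT}).
Hypothesis gammaP : rel_gamma G A gamma.

Lemma rel_gamma1 : gamma 1 = 1.
Proof.
have [AutG gammaM _] := gammaP.
have := gammaM 1 1 (group1 A) (group1 A).
rewrite (aut1 (AutG 1 (group1 A))) mulg1 => g11.
by apply: (mulgI (gamma 1)); rewrite mulg1 -g11.
Qed.

Lemma twisted_pow_rel_in a k : a \in A -> twisted_pow (gamma a) a k \in A.
Proof.
have [_ _ gammaA] := gammaP.
by move=> Aa; elim: k => [|k IH]; rewrite ?group1 // twisted_powS groupM ?gammaA.
Qed.

Lemma rel_gamma_twisted_pow a k : a \in A -> gamma (twisted_pow (gamma a) a k) = gamma a ^+ k.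
Proof.
have [_ gammaM _] := gammaP.
move=> Aa; elim: k => [|k IH]; first exact: rel_gamma1.
by rewrite twisted_powS gammaM ?twisted_pow_rel_in // IH expgSr.
Qed.

Lemma rel_gamma_fixpoint a c : a \in A -> c \in A -> gamma a c * a = c -> gamma a = 1.
Proof.
have [_ gammaM _] := gammaP.
move=> Aa Ac fix_c; have := gammaM c a Ac Aa; rewrite fix_c => gc.
by apply: (mulgI (gamma c)); rewrite mulg1 -gc.
Qed.

End RelGamma.

Section CyclicPGroup.
Variables (gT : finGroupType) (G : {group gT}) (p n : nat) (a : gT) (eta : {perm gT}).
Hypotheses (p_pr : prime p) (p_odd : odd p) (Ga : a \in G) (oa : #[a] = (p ^ n)%N)
  (AutGeta : eta \in Aut G).
Local Notation N := (p ^ n)%N.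

Lemma eq_twisted_pow s i j : eta a = a ^+ s -> s = 1 %[mod p] ->
  (twisted_pow eta a i == twisted_pow eta a j) = (i == j %[mod N]).
Proof.
move=> etaa s1; rewrite !(twisted_pow_geom AutGeta Ga _ etaa).
by rewrite eq_expg_mod_order oa eqn_geom_sum_mod.
Qed.

Lemma twisted_pow_onto s x : eta a = a ^+ s -> s = 1 %[mod p] -> x \in <[a]> ->
  exists k, x = twisted_pow eta a k.
Proof.
move=> etaa s1 Ax.
have inj_tw : injective (fun k : 'I_N => twisted_pow eta a k).
  by move=> i j /eqP; rewrite (eq_twisted_pow _ _ etaa s1) !modn_small // => /eqP /val_inj.
have sub_tw : [set twisted_pow eta a k | k : 'I_N] \subset <[a]>.
  apply/subsetP => _ /imsetP [k _ ->].
  by rewrite (twisted_pow_geom AutGeta Ga _ etaa) mem_cycle.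
have /eqP im_tw : [set twisted_pow eta a k | k : 'I_N] == <[a]>.
  by rewrite eqEcard sub_tw (card_imset _ inj_tw) card_ord -orderE oa leqnn.
by move: Ax; rewrite -im_tw => /imsetP [k _ ->]; exists k.
Qed.

Lemma aut_cycle_exp_1_mod : eta @: <[a]> \subset <[a]> -> (#[eta] %| N)%N ->
  exists2 s, eta a = a ^+ s & s = 1 %[mod p].
Proof.
move=> etaA eta_N; have /cycleP [s etaa] := subsetP etaA _ (imset_f eta (cycle_id a)).
have [n0 | n_gt0] := posnP n.
  have /eqP a1 : a == 1 by rewrite -order_eq1 oa n0.
  by exists 1%N; rewrite // expg1 a1 (aut1 AutGeta).
exists s => //.
have etaXa k : (eta ^+ k) a = a ^+ (s ^ k).
  elim: k => [|k IH]; first by rewrite expg0 perm1 expn0 expg1.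
  by rewrite expgSr permM IH (aut_expg AutGeta) // etaa -expgM expnS.
have etaN1 : eta ^+ N == 1 by rewrite -order_dvdn.
have /eqP : a ^+ (s ^ N) = a ^+ 1 by rewrite -etaXa (eqP etaN1) perm1 expg1.
rewrite eq_expg_mod_order oa => /eqP sN.
have p_N : (p %| N)%N by rewrite dvdn_exp.
by rewrite -(fermat_little_pexp s n p_pr) -(modn_dvdm _ p_N) sN modn_dvdm.
Qed.

Lemma rel_gamma_cond gamma : rel_gamma G <[a]> gamma -> gamma a = eta ->
  eta @: <[a]> \subset <[a]> /\ (#[eta] %| N)%N.
Proof.
move=> gammaP gamma_a; have [_ _ gammaA] := gammaP; have Aa := cycle_id a.
have etaA x : x \in <[a]> -> eta x \in <[a]> by move=> Ax; rewrite -gamma_a gammaA.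
split; first by apply/subsetP => _ /imsetP [x Ax ->]; apply: etaA.
have [r etaa] := cycle_expS (etaA a Aa).
have [p_r | p'r] := boolP (p %| r)%N.
  have r1 : r.+1 = 1 %[mod p] by rewrite -addn1 -modnDml (eqP p_r).
  have tw_N : twisted_pow eta a N = twisted_pow eta a 0.
    by apply/eqP; rewrite (eq_twisted_pow _ _ etaa r1) modnn mod0n.
  have := rel_gamma_twisted_pow gammaP N Aa.
  by rewrite gamma_a tw_N (rel_gamma1 gammaP) order_dvdn => <-.
have a'r : coprime #|<[a]>| r by rewrite -orderE oa coprimeXl // prime_coprime.
pose c := a^-1 ^+ expg_invn <[a]> r.
have Ac : c \in <[a]> by rewrite groupX ?groupV.
have cr : c ^+ r = a^-1 by rewrite expgnAC expgK ?groupV.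
have fix_c : gamma a c * a = c.
  by rewrite gamma_a (aut_cycle_expg AutGeta Ga etaa Ac) expgS cr mulgKV.
by rewrite -gamma_a (rel_gamma_fixpoint gammaP Aa Ac fix_c) order1 dvd1n.
Qed.

Lemma rel_gamma_exists : eta @: <[a]> \subset <[a]> -> (#[eta] %| N)%N ->
  exists gamma, rel_gamma G <[a]> gamma /\ gamma a = eta.
Proof.
move=> etaA eta_N.
have [s etaa s1] := aut_cycle_exp_1_mod etaA eta_N.
have N_gt0 : (0 < N)%N by rewrite expn_gt0 prime_gt0.
pose gamma x := if [pick k : 'I_N | twisted_pow eta a k == x] is Some k then eta ^+ k else 1.
have gammaE k : gamma (twisted_pow eta a k) = eta ^+ k.
  rewrite /gamma; case: pickP => [k' | no_k]; last first.
    have := no_k (Ordinal (ltn_pmod k N_gt0)).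
    by rewrite /= (eq_twisted_pow _ _ etaa s1) modn_mod eqxx.
  rewrite (eq_twisted_pow _ _ etaa s1) => /eqP kk'.
  by apply/eqP; rewrite eq_expg_mod_order -(modn_dvdm k eta_N) -(modn_dvdm k' eta_N) kk'.
have etaXA j : {in <[a]>, forall x, (eta ^+ j) x \in <[a]>}.
  elim: j => [|j IH] x Ax; first by rewrite expg0 perm1.
  by rewrite expgSr permM (subsetP etaA) ?imset_f ?IH.
have onto x := @twisted_pow_onto s x etaa s1.
exists gamma; split; last first.
  have -> : a = twisted_pow eta a 1 by rewrite twisted_powS (aut1 AutGeta) mul1g.
  by rewrite gammaE expg1.
split.
- by move=> _ /onto [k ->]; rewrite gammaE groupX.
- move=> _ _ /onto [i ->] /onto [j ->].
  by rewrite !gammaE -(twisted_powD AutGeta Ga) gammaE expgD.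
- by move=> x _ Ax /onto [j ->]; rewrite gammaE etaXA.
Qed.

Lemma rel_gamma_uniq gamma1 gamma2 :
  rel_gamma G <[a]> gamma1 -> gamma1 a = eta ->
  rel_gamma G <[a]> gamma2 -> gamma2 a = eta ->
  {in <[a]>, gamma1 =1 gamma2}.
Proof.
move=> gamma1P gamma1_a gamma2P gamma2_a x Ax.
have [etaA eta_N] := rel_gamma_cond gamma1P gamma1_a.
have [s etaa s1] := aut_cycle_exp_1_mod etaA eta_N.
have [k ->] := twisted_pow_onto etaa s1 Ax.
rewrite -[in LHS]gamma1_a -[in RHS]gamma2_a.
rewrite (rel_gamma_twisted_pow gamma1P) ?(rel_gamma_twisted_pow gamma2P) ?cycle_id //.
by rewrite gamma1_a gamma2_a.
Qed.

End CyclicPGroup.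

Theorem mainTheorem9 (gT : finGroupType) (G : {group gT}) (p n : nat)
  (a : gT) (eta : {perm gT}) :
  prime p -> odd p -> a \in G -> #[a] = (p ^ n)%N -> eta \in Aut G ->
  ((exists gamma : gT -> {perm gT},
       rel_gamma G <[a]> gamma /\ gamma a = eta)
   <-> (eta @: <[a]> \subset <[a]>) /\ (#[eta] %| p ^ n)%N)
  /\ (forall gamma1 gamma2 : gT -> {perm gT},
        rel_gamma G <[a]> gamma1 -> gamma1 a = eta ->
        rel_gamma G <[a]> gamma2 -> gamma2 a = eta ->
        {in <[a]>, gamma1 =1 gamma2}).
Proof.
move=> p_pr p_odd Ga oa AutGeta.
split; last exact: rel_gamma_uniq p_pr p_odd Ga oa AutGeta.
split; first by case=> gamma [gammaP gamma_a]; apply: rel_gamma_cond gammaP gamma_a.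
by case; apply: rel_gamma_exists.
Qed.
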